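(* Let $s$ be an aperiodic standard episturmian word over a finite alphabet, and let $k$ be the number of distinct letters occurring in $s$. Then there exists a coloring $c:\mathcal F^+ s\to\{0,1,\ldots,k\}$ of the non-empty factors of $s$ such that for every factorization $s=V_1V_2\cdots V_n\cdots$ of $s$ into non-empty factors $V_i$, there exist integers $i,j$ with $c(V_i)\neq c(V_j)$. (For instance, writing the letters of $s$ as $a_1,\ldots,a_k$: $c(V)=0$ if $V$ is not a prefix of $s$, and $c(V)=m$ if $V$ is a prefix of $s$ ending in $a_m$.)
   Context: An infinite word $s$ over a finite alphabet $A$ is standard episturmian if its set of factors is closed under reversal and every left special factor of $s$ is a prefix of $s$; here a factor $u$ is left special if there are distinct letters $x,y\in A$ with $xu$ and $yu$ both factors of $s$. Aperiodic means not ultimately periodic. $\mathcal F^+ s$ denotes the set of non-empty factors of $s$. *)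

From mathcomp Require Import all_boot.
Set Implicit Arguments. Unset Strict Implicit. Unset Printing Implicit Defensive.

Section Words.
Variable A : finType.

Definition factor_at (s : nat -> A) (i n : nat) : seq A := mkseq (fun j => s (i + j)) n.

Definition is_factor (s : nat -> A) (u : seq A) : Prop :=
  exists i, u = factor_at s i (size u).

Definition is_prefix (s : nat -> A) (u : seq A) : Prop :=
  u = factor_at s 0 (size u).

Definition left_special (s : nat -> A) (u : seq A) : Prop :=
  exists x y : A, x <> y /\ is_factor s (x :: u) /\ is_factor s (y :: u).

Definition standard_episturmian (s : nat -> A) : Prop :=
  (forall u, is_factor s u -> is_factor s (rev u)) /\
  (forall u, left_special s u -> is_prefix s u).

Definition ultimately_periodic (s : nat -> A) : Prop :=
  exists p N, 0 < p /\ forall n, N <= n -> s (n + p) = s n.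

Definition aperiodic (s : nat -> A) : Prop := ~ ultimately_periodic s.

(* starting position of the n-th block V n in the concatenation V 0 V 1 ... *)
Fixpoint cut_pos (V : nat -> seq A) (n : nat) : nat :=
  match n with 0 => 0 | n'.+1 => cut_pos V n' + size (V n') end.

Definition is_factorization (s : nat -> A) (V : nat -> seq A) : Prop :=
  (forall n, V n <> [::]) /\
  (forall n, V n = factor_at s (cut_pos V n) (size (V n))).

End Words.

(* Structure of the proof.
   1. Combinatorics of the first letter y of s: every other letter is followed
      by y and never squared (otherwise s would be ultimately 2-periodic).
   2. Desubstitution: s = psi_y(s') where psi_y : y |-> y, c |-> y c; the
      derived word s' is again aperiodic and standard episturmian.
   3. Key lemma (no_bordered_occurrence): if the prefix w of s is a palindrome
      and b is not the letter following w, then b w b is not a factor of s.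
      Induction on |w|, descending from s to s'.
   4. If s = V_0 V_1 ... with all V_i prefixes ending with the same letter a,
      the first mismatch between s and its shift by |V_0| produces a
      palindromic prefix w with a w a a factor, contradicting 3.
   5. A monochromatic factorization for the prefix coloring is exactly of
      the kind excluded in 4, which proves the theorem. *)

From mathcomp Require Import all_boot zify.
From Stdlib Require Import Classical.
Set Implicit Arguments. Unset Strict Implicit. Unset Printing Implicit Defensive.

Section Factors.
Variable A : finType.
Implicit Types (s : nat -> A).

Lemma factor_atS s i n : factor_at s i n.+1 = s i :: factor_at s i.+1 n.
Proof.
apply: (@eq_from_nth _ (s 0)); first by rewrite /factor_at /= !size_map !size_iota.
move=> [|j]; rewrite /factor_at size_mkseq => hj; first by rewrite nth_mkseq // addn0.
by rewrite /= (nth_map 0) ?size_iota // nth_iota // nth_mkseq // add1n addSnnS.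
Qed.

Lemma size_factor_at s i n : size (factor_at s i n) = n.
Proof. exact: size_mkseq. Qed.

Lemma nth_factor_at s x0 i n j : j < n -> nth x0 (factor_at s i n) j = s (i + j).
Proof. by move=> h; rewrite nth_mkseq. Qed.

Lemma factor_at_eqP s i j n :
  factor_at s i n = factor_at s j n <-> (forall t, t < n -> s (i + t) = s (j + t)).
Proof.
split=> [E t ht | H].
  by have := congr1 (nth (s 0) ^~ t) E; rewrite !nth_factor_at.
apply: (@eq_from_nth _ (s 0)); rewrite ?size_factor_at // => t ht.
by rewrite !nth_factor_at // H.
Qed.

Lemma factor_at_cat s i m n :
  factor_at s i (m + n) = factor_at s i m ++ factor_at s (i + m) n.
Proof.
elim: m i => [|m IH] i; first by rewrite add0n addn0.
by rewrite addSn !factor_atS IH addSnnS.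
Qed.

Lemma factor_at_rcons s i n : factor_at s i n.+1 = rcons (factor_at s i n) (s (i + n)).
Proof. by rewrite -addn1 factor_at_cat -cats1 factor_atS. Qed.

Lemma factor_at_factor s i n : is_factor s (factor_at s i n).
Proof. by exists i; rewrite size_factor_at. Qed.

Lemma factor2P s (a b : A) : is_factor s [:: a; b] <-> exists k, s k = a /\ s k.+1 = b.
Proof.
split; first by case=> k; rewrite /= !factor_atS => -[-> ->]; exists k.
by case=> k [<- <-]; exists k; rewrite /= !factor_atS.
Qed.

Lemma prefix1 s (a : A) : is_prefix s [:: a] -> a = s 0.
Proof. by rewrite /is_prefix /= factor_atS => -[]. Qed.

Lemma alternating_tail_periodic s i (c d : A) :
  (forall t, s (i + t) = if odd t then d else c) -> ultimately_periodic s.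
Proof.
move=> H; exists 2, i; split => // n hn.
by rewrite -(subnKC hn) -addnA !H addn2 /= negbK.
Qed.

End Factors.

Lemma cat_inj (T : eqType) (s1 s2 t1 t2 : seq T) :
  size s1 = size t1 -> s1 ++ s2 = t1 ++ t2 -> s1 = t1 /\ s2 = t2.
Proof. by move=> h /eqP; rewrite eqseq_cat // => /andP[/eqP -> /eqP ->]. Qed.

Lemma interval_of (f : nat -> nat) : f 0 = 0 -> (forall k, f k < f k.+1) ->
  forall i, exists k, f k <= i < f k.+1.
Proof.
move=> f0 fS; elim=> [|i [k /andP[h1 h2]]]; first by exists 0; have := fS 0; rewrite f0.
case: (ltnP i.+1 (f k.+1)) => h3; first by exists k; rewrite h3 ltnW.
exists k.+1; have e : f k.+1 = i.+1 by apply/eqP; rewrite eqn_leq h3.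
by rewrite e leqnn -e fS.
Qed.

Section Episturmian.
Variable A : finType.
Variable s : nat -> A.
Hypothesis epi : standard_episturmian s.
Hypothesis aper : aperiodic s.
Notation y := (s 0).

Lemma left_extension_unique u c d : ~ is_prefix s u ->
  is_factor s (c :: u) -> is_factor s (d :: u) -> c = d.
Proof.
move=> np hc hd; case: (eqVneq c d) => // cd.
by exfalso; apply: np; apply: epi.2; exists c, d; split => //; apply/eqP.
Qed.

Lemma pred_unique (b c d : A) j k : b != y ->
  s j = c -> s j.+1 = b -> s k = d -> s k.+1 = b -> c = d.
Proof.
move=> hb hj hj1 hk hk1; apply: (@left_extension_unique [:: b]).
- by move/prefix1 => e; rewrite e eqxx in hb.
- by apply/factor2P; exists j.
- by apply/factor2P; exists k.
Qed.

(* Closure under reversal turns an occurrence of c d into one of d c. *)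
Lemma factor2_rev (c d : A) j : s j = c -> s j.+1 = d ->
  exists k, s k = d /\ s k.+1 = c.
Proof.
by move=> hj hj1; apply/factor2P; apply: (epi.1 [:: c; d]); apply/factor2P; exists j.
Qed.

Lemma first_letter_separating i : s i != y -> s i.+1 = y.
Proof.
set c := s i => hc; case: (eqVneq (s i.+1) y) => // hd; exfalso.
set d := s i.+1 in hd.
have [k0 [k0d k0c]] := factor2_rev (erefl c) (erefl d).
(* every c is followed by d and every d by c, so s alternates from i on *)
have next_c j : s j = c -> s j.+1 = d.
  move=> hj; have [k [hk hk1]] := factor2_rev hj (erefl _).
  by apply: (pred_unique hc hk hk1 k0d k0c).
have next_d j : s j = d -> s j.+1 = c.
  move=> hj; have [k [hk hk1]] := factor2_rev hj (erefl _).
  by apply: (pred_unique hd hk hk1 (erefl c) (erefl d)).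
apply: aper; apply: (@alternating_tail_periodic _ s i c d) => t.
elim: t => [|t IH]; first by rewrite addn0.
by rewrite addnS /=; case: (odd t) IH => /= IH; [exact: next_d | exact: next_c].
Qed.

Lemma no_square_letter (b : A) i : b != y -> s i = b -> s i.+1 = b -> False.
Proof.
move=> hb h1 h2.
have next_b j : s j = b -> s j.+1 = b.
  move=> hj; have [k [hk hk1]] := factor2_rev hj (erefl _).
  by apply: (pred_unique hb hk hk1 h1 h2).
apply: aper; apply: (@alternating_tail_periodic _ s i b b) => t; rewrite if_same.
by elim: t => [|t IH]; [rewrite addn0 | rewrite addnS; apply: next_b].
Qed.

End Episturmian.

Section Morphism.
Variable A : finType.
Variable y : A.

Definition psi_letter (c : A) : seq A := if c == y then [:: y] else [:: y; c].
Fixpoint psi (u : seq A) : seq A := if u is c :: u' then psi_letter c ++ psi u' else [::].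

Lemma size_psi_letter c : size (psi_letter c) = if c == y then 1 else 2.
Proof. by rewrite /psi_letter; case: eqP. Qed.

Lemma psi_cat u v : psi (u ++ v) = psi u ++ psi v.
Proof. by elim: u => //= c u ->; rewrite catA. Qed.

(* psi_y(u) y is a palindrome whenever u is, since psi_y(rev u) y = rev (psi_y(u) y). *)
Lemma rev_psi u : rev (psi u ++ [:: y]) = psi (rev u) ++ [:: y].
Proof.
elim: u => //= c u IH.
rewrite -catA rev_cat IH rev_cons -cats1 psi_cat -!catA /=.
by congr (_ ++ _); rewrite /psi_letter; case: eqP.
Qed.

Lemma head_psi u : nth y (psi u ++ [:: y]) 0 = y.
Proof. by case: u => //= c u; rewrite /psi_letter; case: eqP. Qed.

End Morphism.

(* Desubstitution: when the first letter y of s separates, s = psi_y(s')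
   for the derived word s' read off after each occurrence of y. *)
Section Derived.
Variable A : finType.
Variable s : nat -> A.
Hypothesis separating : forall i, s i != s 0 -> s i.+1 = s 0.
Notation y := (s 0).

(* position of the k-th occurrence of y in s *)
Fixpoint ypos (k : nat) : nat :=
  if k is k'.+1 then (if s (ypos k').+1 == y then (ypos k').+1 else (ypos k').+2)
  else 0.

Definition derived (k : nat) : A := s (ypos k).+1.

Lemma ypos_y k : s (ypos k) = y.
Proof. by elim: k => //= k IH; case: eqP => // /eqP h; exact: separating. Qed.

Lemma yposS k : ypos k.+1 = ypos k + size (psi_letter y (derived k)).
Proof. by rewrite /= size_psi_letter /derived; case: eqP => _; rewrite ?addn1 ?addn2. Qed.

Lemma ypos_lt k : ypos k < ypos k.+1.
Proof. by rewrite yposS size_psi_letter; case: eqP => _; rewrite ?addn1 ?addn2. Qed.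

Lemma ypos_ltn : {homo ypos : k l / k < l}.
Proof. exact: homo_ltn ltn_trans ypos_lt. Qed.

Lemma ypos_leq : {homo ypos : k l / k <= l}.
Proof. exact: homo_leq leqnn leq_trans (fun k => ltnW (ypos_lt k)). Qed.

Lemma ypos_inj : injective ypos.
Proof. by move=> k l e; case: (ltngtP k l) => // /ypos_ltn; rewrite e ltnn. Qed.

Lemma ypos_ge k : k <= ypos k.
Proof. by elim: k => // k IH; apply: leq_ltn_trans IH (ypos_lt k). Qed.

Lemma ypos_step k : ypos k.+1 <= (ypos k).+2.
Proof. by rewrite yposS size_psi_letter; case: eqP => _; rewrite ?addn1 ?addn2. Qed.

Lemma ypos_onto i : s i = y -> exists k, ypos k = i.
Proof.
move=> hi; have [k /andP[h1 h2]] := interval_of (erefl (ypos 0)) ypos_lt i.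
case: (ltngtP (ypos k) i) h1 => // h3 _; last by exists k.
exfalso; move: h2; rewrite /=; case: eqP => e h2.
  by move: (leq_trans h2 h3); rewrite ltnn.
have e2 : i = (ypos k).+1 by apply/eqP; rewrite eqn_leq -ltnS h2 h3.
by apply: e; rewrite -e2.
Qed.

Lemma ypos_preceding i : s i.+1 = y -> exists k, ypos k.+1 = i.+1 /\ derived k = s i.
Proof.
move=> hi1; case: (eqVneq (s i) y) => [hy|hny].
  have [k e] := ypos_onto hy; exists k.
  by rewrite /= /derived e hi1 eqxx hy.
have i0 : i != 0 by apply: contraNneq hny => ->.
have hp : s i.-1 = y.
  case: (eqVneq (s i.-1) y) => // /separating; rewrite prednK ?lt0n // => e.
  by rewrite e eqxx in hny.
have [k e] := ypos_onto hp; exists k.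
by rewrite /= /derived e prednK ?lt0n // (negbTE hny).
Qed.

Lemma derived_prev k : s (ypos k.+1).-1 = derived k.
Proof. by rewrite /= /derived; case: eqP => //= ->; rewrite ypos_y. Qed.

Lemma psi_letter_at k :
  factor_at s (ypos k) (size (psi_letter y (derived k))) = psi_letter y (derived k).
Proof.
rewrite /derived /psi_letter; case: (eqVneq (s (ypos k).+1) y) => [e|ne] /=.
  by rewrite factor_atS ypos_y.
by rewrite !factor_atS ypos_y.
Qed.

Lemma psi_factor_at m k :
  ypos (k + m) = ypos k + size (psi y (factor_at derived k m)) /\
  factor_at s (ypos k) (size (psi y (factor_at derived k m))).+1 =
    psi y (factor_at derived k m) ++ [:: y].
Proof.
elim: m k => [|m IH] k; first by rewrite addn0 addn0 /= factor_atS ypos_y.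
rewrite factor_atS /= size_cat; have [IH1 IH2] := IH k.+1.
split; first by rewrite addnS -addSn IH1 yposS addnA.
by rewrite -addnS factor_at_cat psi_letter_at -yposS IH2 catA.
Qed.

Lemma psi_preimage u k :
  factor_at s (ypos k) (size (psi y u)).+1 = psi y u ++ [:: y] ->
  factor_at derived k (size u) = u /\ ypos (k + size u) = ypos k + size (psi y u).
Proof.
elim: u k => [|c u IH] k /=; first by rewrite !addn0.
rewrite size_cat => H.
have dk : derived k = c.
  have := congr1 (nth y ^~ 1) H.
  rewrite nth_factor_at; last by rewrite size_psi_letter; case: eqP.
  rewrite addn1 -/(derived k) -catA /psi_letter; case: eqP => [->|_] //= ->.
  exact: head_psi.
rewrite -addnS factor_at_cat -catA in H.
have [_ H2] := cat_inj (size_factor_at _ _ _) H.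
rewrite -dk -yposS in H2; have [IH1 IH2] := IH _ H2.
by rewrite factor_atS IH1 dk addnS -addSn IH2 yposS dk addnA.
Qed.

Lemma psi_preimage_inj u v k :
  factor_at s (ypos k) (size (psi y u)).+1 = psi y u ++ [:: y] ->
  psi y u ++ [:: y] = psi y v ++ [:: y] -> u = v.
Proof.
move=> Hu Huv.
have Hs : size (psi y u) = size (psi y v).
  by have := congr1 size Huv; rewrite !size_cat /= !addn1 => -[].
have Hv : factor_at s (ypos k) (size (psi y v)).+1 = psi y v ++ [:: y] by rewrite -Hs Hu.
have [U1 U2] := psi_preimage Hu; have [V1 V2] := psi_preimage Hv.
have e : size u = size v.
  by apply/eqP; rewrite -(inj_eq (@addnI k)) -(inj_eq ypos_inj) U2 V2 Hs.
by rewrite -U1 -V1 e.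
Qed.

End Derived.

Section DerivedEpisturmian.
Variable A : finType.
Variable s : nat -> A.
Hypothesis epi : standard_episturmian s.
Hypothesis aper : aperiodic s.
Notation y := (s 0).
Let sep := first_letter_separating epi aper.
Notation ypos := (ypos s).
Notation s' := (derived s).

Lemma psi_occurrence_at_y u j :
  psi y u ++ [:: y] = factor_at s j (size (psi y u)).+1 -> s j = y.
Proof.
move=> H; have := congr1 (nth y ^~ 0) H; rewrite nth_factor_at // addn0 => <-.
exact: head_psi.
Qed.

(* u is a factor of s' iff psi_y(u) y is a factor of s; the latter family is
   closed under reversal by rev_psi. *)
Lemma derived_rev_closed u : is_factor s' u -> is_factor s' (rev u).
Proof.
case=> k Hk; have [_ C2] := psi_factor_at sep (size u) k; rewrite -Hk in C2.
have F : is_factor s (psi y u ++ [:: y]) by rewrite -C2; apply: factor_at_factor.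
have := epi.1 _ F; rewrite rev_psi => -[j Hj].
rewrite size_cat addn1 in Hj.
have [k' Hk'] := ypos_onto (psi_occurrence_at_y Hj); rewrite -Hk' in Hj.
by have [T1 _] := psi_preimage (esym Hj); exists k'; rewrite T1.
Qed.

(* c u is a factor of s' only if c psi_y(u) y is a factor of s, so left
   special factors of s' come from left special factors of s. *)
Lemma derived_left_special_prefix u : left_special s' u -> is_prefix s' u.
Proof.
have lift c : is_factor s' (c :: u) -> is_factor s (c :: (psi y u ++ [:: y])).
  move=> [k Hk]; rewrite /= factor_atS in Hk; case: Hk => Hc Hk.
  have [_ C2] := psi_factor_at sep (size u) k.+1; rewrite -Hk in C2.
  have pos : 0 < ypos k.+1 by apply: leq_ltn_trans (ypos_lt s k).
  exists (ypos k.+1).-1.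
  by rewrite /= size_cat addn1 factor_atS prednK // C2 (derived_prev sep) -Hc.
case=> c [d [cd [Fc Fd]]].
have : is_prefix s (psi y u ++ [:: y]).
  by apply: epi.2; exists c, d; split => //; split; apply: lift.
rewrite /is_prefix size_cat addn1 => P.
by have [T1 _] := psi_preimage (k := 0) (esym P); rewrite /is_prefix T1.
Qed.

Lemma derived_episturmian : standard_episturmian s'.
Proof. by split; [exact: derived_rev_closed | exact: derived_left_special_prefix]. Qed.

(* A period p of s' from N on yields the period ypos(N+p) - ypos N of s. *)
Lemma derived_aperiodic : aperiodic s'.
Proof.
move=> [p [N [p0 Hp]]]; apply: aper.
set P := ypos (N + p) - ypos N.
have shift t : ypos (N + t + p) = ypos (N + t) + P.
  elim: t => [|t IH]; first by rewrite addn0 /P subnKC // ypos_leq // leq_addr.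
  have e1 : N + t.+1 + p = (N + t + p).+1 by rewrite addnS addSn.
  by rewrite e1 addnS (yposS _ (N + t + p)) (yposS _ (N + t)) IH Hp ?leq_addr // addnAC.
have P0 : 0 < P by rewrite subn_gt0 ypos_ltn // -{1}(addn0 N) ltn_add2l.
exists P, (ypos N); split => // i hi.
have [k /andP[h1 h2]] := interval_of (erefl (ypos 0)) (ypos_lt s) i.
have kN : N <= k.
  rewrite leqNgt; apply/negP => /(@ypos_leq _ s) h3.
  by move: (leq_trans h3 hi); rewrite leqNgt h2.
have Gk : ypos (k + p) = ypos k + P by rewrite -(subnKC kN) shift.
have := ypos_step s k; rewrite leq_eqVlt ltnS => /orP[/eqP e|h4].
- have : i = ypos k \/ i = (ypos k).+1.
    move: h2; rewrite e ltnS leq_eqVlt ltnS => /orP[/eqP ->|h5]; [by right|left].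
    by apply/eqP; rewrite eqn_leq h1 h5.
  case=> ->; first by rewrite -Gk !(ypos_y sep).
  by rewrite addSn -Gk -/(s' (k + p)) Hp.
- have -> : i = ypos k by apply/eqP; rewrite eqn_leq h1 -ltnS (leq_trans h2 h4).
  by rewrite -Gk !(ypos_y sep).
Qed.

End DerivedEpisturmian.

Definition bordered_occurrence (A : finType) (s : nat -> A) (n : nat) (b : A) : Prop :=
  exists i, s i = b /\ factor_at s i.+1 n = factor_at s 0 n /\ s (i.+1 + n) = b.

Lemma palindromic_prefix_last (A : finType) (s : nat -> A) n :
  rev (factor_at s 0 n.+1) = factor_at s 0 n.+1 -> s n = s 0.
Proof.
move=> pal; have := congr1 (nth (s 0) ^~ n) pal.
by rewrite nth_rev size_factor_at // subSS subnn !nth_factor_at.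
Qed.

(* A nonempty palindromic prefix w of s ends with y, say at the k-th y; then
   w = psi_y(w') y for the prefix w' of length k of s', and palindromicity and
   bordered occurrences of w descend to w'. *)
Section Descent.
Variable A : finType.
Variable s : nat -> A.
Hypothesis epi : standard_episturmian s.
Hypothesis aper : aperiodic s.
Notation y := (s 0).
Let sep := first_letter_separating epi aper.
Notation s' := (derived s).
Variables n k : nat.
Hypothesis yk : ypos s k = n.

Lemma prefix_as_psi :
  n = size (psi y (factor_at s' 0 k)) /\
  factor_at s 0 n.+1 = psi y (factor_at s' 0 k) ++ [:: y].
Proof.
by have [C1 C2] := psi_factor_at sep k 0; rewrite add0n /= yk in C1 C2; rewrite C1.
Qed.

Lemma derived_palindrome :
  rev (factor_at s 0 n.+1) = factor_at s 0 n.+1 ->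
  rev (factor_at s' 0 k) = factor_at s' 0 k.
Proof.
have [sz w_psi] := prefix_as_psi; set w' := factor_at s' 0 k in sz w_psi *.
rewrite w_psi rev_psi => Hrev.
apply: (@psi_preimage_inj _ s _ _ 0 _ Hrev).
have -> : size (psi y (rev w')) = size (psi y w').
  by have := congr1 size Hrev; rewrite !size_cat /= !addn1 => -[].
by rewrite Hrev /= -sz -w_psi.
Qed.

Lemma derived_bordered_occurrence b :
  bordered_occurrence s n.+1 b -> bordered_occurrence s' k b.
Proof.
move=> [i [hi [F hib]]].
have [sz w_psi] := prefix_as_psi; set w' := factor_at s' 0 k in sz w_psi.
have [i' [yi' di']] : exists i', ypos s i'.+1 = i.+1 /\ s' i' = b.
  rewrite -hi; apply: ypos_preceding => //.
  by have := congr1 (nth y ^~ 0) F; rewrite !nth_factor_at // addn0.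
have [T1 T2] : factor_at s' i'.+1 (size w') = w' /\
               ypos s (i'.+1 + size w') = ypos s i'.+1 + size (psi y w').
  by apply: psi_preimage; rewrite yi' -sz F.
rewrite size_factor_at in T1 T2.
exists i'; split => //; split => //.
by rewrite /derived T2 yi' -sz -addnS.
Qed.

End Descent.

(* By induction on n:
   the base case is no_square_letter, and the inductive step descends to the
   derived word, which is again aperiodic standard episturmian. *)
Theorem no_bordered_occurrence (A : finType) n (s : nat -> A) b :
  standard_episturmian s -> aperiodic s ->
  rev (factor_at s 0 n) = factor_at s 0 n -> s n != b ->
  ~ bordered_occurrence s n b.
Proof.
elim/ltn_ind: n s b => -[|n] IH s b epi aper pal hb.
  move=> [i [hi [_ hib]]]; rewrite addn0 in hib.
  by apply: (no_square_letter epi aper _ hi hib); rewrite eq_sym.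
have [k yk] := ypos_onto (palindromic_prefix_last pal).
move=> /(derived_bordered_occurrence epi aper yk).
apply: (IH k _ _ b (derived_episturmian epi aper) (derived_aperiodic epi aper)).
- by rewrite ltnS -yk ypos_ge.
- exact: (derived_palindrome epi aper yk pal).
- by rewrite /derived yk.
Qed.

(* Two occurrences of the prefix w of s followed by different letters make
   rev w left special, hence a prefix: w is a palindrome. *)
Lemma right_special_prefix_palindrome (A : finType) (s : nat -> A) P L :
  standard_episturmian s ->
  factor_at s P L = factor_at s 0 L -> s (P + L) != s L ->
  rev (factor_at s 0 L) = factor_at s 0 L.
Proof.
move=> epi wP hL; set w := factor_at s 0 L in wP *.
have occ j : factor_at s j L = w -> is_factor s (s (j + L) :: rev w).
  move=> hj; rewrite -rev_rcons; apply: epi.1.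
  by exists j; rewrite size_rcons size_factor_at -hj factor_at_rcons.
have : is_prefix s (rev w).
  apply: epi.2; exists (s L), (s (P + L)); split; first by apply/eqP; rewrite eq_sym.
  by split; [have := occ 0 erefl; rewrite add0n | exact: occ].
by rewrite /is_prefix size_rev size_factor_at.
Qed.

Lemma first_mismatch (A : finType) (s : nat -> A) P : aperiodic s -> 0 < P ->
  exists L, s (P + L) != s L /\ forall t, t < L -> s (P + t) = s t.
Proof.
move=> aper P0.
have [L0 hL0] : exists L, s (P + L) != s L.
  apply: NNPP => H; apply: aper; exists P, 0; split => // n _.
  by apply: NNPP => /eqP h; apply: H; exists n; rewrite addnC.
case: (ex_minnP (ex_intro (fun L => s (P + L) != s L) L0 hL0)) => L hL minL.
exists L; split => // t ht.
by apply/eqP; apply: contraTT ht => /minL; rewrite -leqNgt.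
Qed.

Section PrefixFactorization.
Variable A : finType.
Variable s : nat -> A.
Hypothesis epi : standard_episturmian s.
Hypothesis aper : aperiodic s.
Variable Vs : nat -> seq A.
Hypothesis fact : is_factorization s Vs.
Hypothesis prefixes : forall n, Vs n = factor_at s 0 (size (Vs n)).
Variable a : A.
Hypothesis ends_with_a : forall n, s (cut_pos Vs n.+1).-1 = a.
Notation p := (cut_pos Vs).

Lemma cut_pos_lt n : p n < p n.+1.
Proof.
by rewrite /= -{1}(addn0 (p n)) ltn_add2l lt0n size_eq0; apply/eqP; exact: fact.1.
Qed.

Lemma block_letter n t : t < size (Vs n) -> s (p n + t) = s t.
Proof.
move=> ht; have := fact.2 n; rewrite {1}prefixes => /factor_at_eqP/(_ t ht).
by rewrite add0n.
Qed.

(* Let P = |V_0| and L be the first mismatch of s with its shift by P.  The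
   prefix w of length L is a palindrome that occurs at P preceded by a (the
   last letter of V_0) and, looking at the block containing P + L, followed
   by a as well: a w a is a bordered occurrence, which is impossible. *)
Lemma no_prefix_factorization_with_same_last_letter : False.
Proof.
set P := p 1; have P0 : 0 < P := cut_pos_lt 0.
have [L [hL agree]] := first_mismatch aper P0.
have wP : factor_at s P L = factor_at s 0 L by apply/factor_at_eqP => t /agree.
have pal := right_special_prefix_palindrome epi wP hL.
have [m /andP[m1 m2]] := interval_of (erefl (p 0)) cut_pos_lt (P + L).
have lt1m : 1 < m.
  case: m m1 m2 => [|[|m]] // m1 m2.
    by move: (leq_ltn_trans (leq_addr L P) m2); rewrite ltnn.
  by move: m2 hL; rewrite /= -/P ltn_add2l => /block_letter ->; rewrite eqxx.
have pmP : P < p m by apply: homo_ltn ltn_trans cut_pos_lt _ _ lt1m.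
set d := p m - P.
have shifted : s (P + L) = s (L - d).
  have e : P + L = p m + (L - d) by rewrite /d; lia.
  by rewrite e block_letter // -(ltn_add2l (p m)) -e.
have ea : s (L - d) = a.
  have mirror : s d.-1 = s (L - d).
    have := congr1 (nth (s 0) ^~ d.-1) pal.
    rewrite nth_rev ?size_factor_at ?nth_factor_at ?add0n; try lia.
    by move=> <-; congr (s _); lia.
  have last_m : s (p m).-1 = a by rewrite -(prednK (ltnW lt1m)) ends_with_a.
  by rewrite -mirror -agree; [rewrite -last_m; congr (s _); lia | lia].
apply: (no_bordered_occurrence (b := a) epi aper pal).
- by rewrite -ea -shifted eq_sym.
- exists P.-1; rewrite prednK //; split; first exact: ends_with_a 0.
  by split; [exact: wP | rewrite -ea -shifted].
Qed.

End PrefixFactorization.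

Lemma last_block (A : finType) (s : nat -> A) (Vs : nat -> seq A) x0 n :
  is_factorization s Vs -> last x0 (Vs n) = s (cut_pos Vs n.+1).-1.
Proof.
move=> [ne blocks]; have sz : 0 < size (Vs n) by rewrite lt0n size_eq0; apply/eqP.
rewrite blocks -(prednK sz) factor_at_rcons last_rcons /=.
by congr (s _); lia.
Qed.

Definition prefix_coloring (A : finType) (s : nat -> A) (B : {set A}) (V : seq A) : nat :=
  if (V == factor_at s 0 (size V)) && (V != [::])
  then (index (last (s 0) V) (enum B)).+1 else 0.

Section Coloring.
Variable A : finType.
Variable s : nat -> A.
Variable B : {set A}.
Hypothesis letters_in_B : forall n, s n \in B.
Notation c := (prefix_coloring s B).

Lemma last_factor_in_B i n : last (s 0) (factor_at s i n.+1) \in enum B.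
Proof. by rewrite mem_enum factor_at_rcons last_rcons. Qed.

Lemma prefix_coloring_bound V : is_factor s V -> V <> [::] -> c V <= #|B|.
Proof.
move=> [i Hi] nV; rewrite /prefix_coloring; case: ifP => // _.
case: (size V) Hi => [|n] Hi; first by rewrite Hi in nV.
by rewrite Hi cardE index_mem last_factor_in_B.
Qed.

Lemma prefix_coloring_prefix V : c V != 0 -> V = factor_at s 0 (size V).
Proof. by rewrite /prefix_coloring; case: ifP => // /andP[/eqP]. Qed.

Lemma prefix_coloring_last U V : c U != 0 -> c U = c V -> last (s 0) U = last (s 0) V.
Proof.
have inB W : c W != 0 -> last (s 0) W \in enum B.
  rewrite /prefix_coloring; case: ifP => // /andP[/eqP eW nW] _.
  by move: eW nW; case: (size W) => [|n] -> // _; exact: last_factor_in_B.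
move=> cU eUV; have cV : c V != 0 by rewrite -eUV.
rewrite -(nth_index (s 0) (inB _ cU)) -(nth_index (s 0) (inB _ cV)).
move: eUV cU cV; rewrite /prefix_coloring.
by case: ifP => // _; case: ifP => // _ [->].
Qed.

End Coloring.

Theorem mainTheorem10 (A : finType) (s : nat -> A) (B : {set A}) :
  standard_episturmian s -> aperiodic s ->
  (forall a : A, a \in B <-> exists n, s n = a) ->
  exists c : seq A -> nat,
    (forall V, is_factor s V -> V <> [::] -> c V <= #|B|) /\
    (forall Vs : nat -> seq A, is_factorization s Vs ->
       exists i j, c (Vs i) <> c (Vs j)).
Proof.
move=> epi aper HB; have inB n : s n \in B by apply/HB; exists n.
exists (prefix_coloring s B); split; first exact: prefix_coloring_bound.
move=> Vs fact; apply: NNPP => monochromatic.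
have same_color n : prefix_coloring s B (Vs n) = prefix_coloring s B (Vs 0).
  by apply: NNPP => h; apply: monochromatic; exists n, 0.
have c0 : prefix_coloring s B (Vs 0) != 0.
  have V0 : Vs 0 = factor_at s 0 (size (Vs 0)) by rewrite {1}(fact.2 0).
  by rewrite /prefix_coloring -V0 eqxx; case: (Vs 0) (fact.1 0).
have prefixes n : Vs n = factor_at s 0 (size (Vs n)).
  by apply: (prefix_coloring_prefix (B := B)); rewrite same_color.
apply: (no_prefix_factorization_with_same_last_letter epi aper fact prefixes
          (a := last (s 0) (Vs 0))) => n.
have same_last := prefix_coloring_last inB c0 (esym (same_color n)).
by rewrite -(last_block (s 0) _ fact) same_last.
Qed.
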